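(* Consider the input-output system $\dot{\mathbf x}=\mathbf F(\mathbf x,u):=\mathbf f(\mathbf x)+\hat{\mathbf e}_1 g(u,x_1)$, $u\in J$, satisfying assumption (A0). Let $\mathbf x^*(u)$, $u\in J$, be a continuously differentiable curve of steady states ($\mathbf F(\mathbf x^*(u),u)=\mathbf 0$) along which $\frac{\partial \mathbf F}{\partial\mathbf x}(\mathbf x^*(u),u)$ is nonsingular, and let $\mathbf J^*=\frac{\partial\mathbf f}{\partial\mathbf x}(\mathbf x^*(u))$. Fix $j\in\{1,\ldots,n\}$. Then: (1) (Flow) $\displaystyle \frac{\partial x_j^*}{\partial u}=\frac{(-1)^j\,\mathbf J^*[\hat 1,\hat j]}{\det \mathbf J^*}$; (2) (Activation) $\displaystyle \frac{\partial x_j^*}{\partial u}=\frac{(-1)^j(x_T-x_1^* )\,\mathbf J^*[\hat 1,\hat j]}{\det\big(\mathbf J^*-\hat{\mathbf e}_{11}[u+k_{\mathrm{on}}+k_{\mathrm{off}}]\big)}$; (3) (Inhibition) $\displaystyle \frac{\partial x_j^*}{\partial u}=\frac{(-1)^{j+1}x_1^*\,\mathbf J^*[\hat 1,\hat j]}{\det\big(\mathbf J^*-\hat{\mathbf e}_{11}[u+k_{\mathrm{on}}+k_{\mathrm{off}}]\big)}$.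
   Context: $\mathcal X\subset\mathbb R^n$, $J\subset\mathbb R$ is an interval, and $\mathbf f:\mathcal X\to\mathbb R^n$ is $C^1$, with every entry of $\frac{\partial\mathbf f}{\partial\mathbf x}$ of constant sign on $\mathcal X$ and negative diagonal entries. $\hat{\mathbf e}_1$ is the first standard basis vector and $\hat{\mathbf e}_{11}$ the matrix with $1$ in position $(1,1)$ and zeros elsewhere. The control term $g$ is one of: flow, $g(u,x_1)=u$; activation, $g(u,x_1)=(u+k_{\mathrm{on}})(x_T-x_1)-k_{\mathrm{off}}x_1$; inhibition, $g(u,x_1)=k_{\mathrm{on}}(x_T-x_1)-(u+k_{\mathrm{off}})x_1$, with constants $x_T,k_{\mathrm{on}},k_{\mathrm{off}}>0$. Assumption (A0): for every $u_0\in J$ there is $\mathbf x_0\in\mathcal X$ with $\mathbf F(\mathbf x_0,u_0)=\mathbf 0$ and $\frac{\partial\mathbf F}{\partial\mathbf x}(\mathbf x_0,u_0)$ of full rank. For a matrix $\mathbf M$, $\mathbf M[\hat 1,\hat j]$ is the determinant of $\mathbf M$ with row $1$ and column $j$ deleted. *)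

From HB Require Import structures.
From mathcomp Require Import all_boot all_order all_algebra.
From mathcomp Require Import all_classical all_reals all_analysis.
Set Implicit Arguments. Unset Strict Implicit. Unset Printing Implicit Defensive.
Import Order.TTheory GRing.Theory Num.Theory.
Import numFieldNormedType.Exports.
Local Open Scope classical_set_scope.
Local Open Scope ring_scope.

(* State space R^n with n = n'.+1 (row vectors); index ord0 is coordinate 1. *)

(* Jacobian matrix with the usual convention: Jac f x i j = d f_i / d x_j.
   (mathcomp-analysis' [jacobian] is lin1_mx ('d f x), i.e. its transpose.) *)
Definition Jac (R : realType) (n : nat) (f : 'rV[R]_n -> 'rV[R]_n) (x : 'rV[R]_n)
  : 'M[R]_n := (jacobian f x)^T.

Inductive ctrl_kind := Flow | Activation | Inhibition.

Definition gctrl (R : realType) (c : ctrl_kind) (xT kon koff : R) (u x1 : R) : R :=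
  match c with
  | Flow => u
  | Activation => (u + kon) * (xT - x1) - koff * x1
  | Inhibition => kon * (xT - x1) - (u + koff) * x1
  end.

Definition Fsys (R : realType) (n : nat) (f : 'rV[R]_n.+1 -> 'rV[R]_n.+1)
  (g : R -> R -> R) (x : 'rV[R]_n.+1) (u : R) : 'rV[R]_n.+1 :=
  f x + g u (x ord0 ord0) *: delta_mx ord0 ord0.

(* Derivative of a curve x : R -> V at u relative to the set J
   (one-sided at endpoints of an interval J). *)
Definition is_deriv_on (R : realType) (V : normedModType R) (J : set R)
  (x : R -> V) (u : R) (dx : V) : Prop :=
  (fun h : R => h^-1 *: (x (h + u) - x u)) @ within [set h | J (h + u)] 0^' --> dx.

Definition minor1 (R : realType) (n : nat) (M : 'M[R]_n.+1) (j : 'I_n.+1) : R :=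
  \det (row' ord0 (col' j M)).

Definition e11 (R : realType) (n : nat) : 'M[R]_n.+1 := delta_mx ord0 ord0.

From HB Require Import structures.
From mathcomp Require Import all_boot all_order all_algebra.
From mathcomp Require Import all_classical all_reals all_analysis.
From mathcomp Require Import ring lra.
Set Implicit Arguments. Unset Strict Implicit. Unset Printing Implicit Defensive.
Import Order.TTheory GRing.Theory Num.Theory.
Import numFieldNormedType.Exports.
Local Open Scope classical_set_scope.
Local Open Scope ring_scope.

(* Each control term is affine in u, with a u-coefficient depending on x_1 only:
   F(x, v) = F(x, u) + (v - u) G(x), where G(x) = (dg/du)(x_1) e_1.  Differentiating
   F(x*(v), v) = 0 at v = u along difference quotients (which also covers the
   one-sided derivatives at the ends of J) gives x*' J_F^T = -G(x*(u)), where
   J_F = J* + (dg/dx_1) e_11.  By Cramer's rule x*_j' is then a multiple of the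
   (1, j) cofactor of J_F, which is that of J* since J_F and J* differ only in
   entry (1, 1). *)

Section DifferenceQuotients.
Variables (R : realType) (V W : normedModType R) (F : set_system R).
Context {FF : ProperFilter F}.
Hypotheses (F_cvg0 : F --> (0 : R)) (F_neq0 : \forall h \near F, h != 0).
Variables (x d : V) (y : R -> V).
Hypothesis y_quotient : (fun h => h^-1 *: (y h - x)) @ F --> d.

Let q h := h^-1 *: (y h - x).

Let yE : \forall h \near F, y h = h *: q h + x.
Proof.
by near=> h; rewrite /q scalerA mulfV ?scale1r ?subrK //; near: h.
Unshelve. all: by end_near. Qed.

Let increment_cvg0 : (fun h => h *: q h) @ F --> (0 : V).
Proof. by rewrite -(scale0r d); apply: cvgZ. Qed.

Lemma cvg_of_difference_quotient : y @ F --> x.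
Proof.
rewrite -[x in _ --> x]add0r.
apply: cvg_trans (cvgD increment_cvg0 (cvg_cst x)).
by apply: near_eq_cvg; near=> h; apply/esym; near: h.
Unshelve. all: by end_near. Qed.

Let remainder_quotient_cvg0 (e : V -> W) : e =o_ (0 : V) id ->
  (fun h => h^-1 *: e (h *: q h)) @ F --> (0 : W).
Proof.
move=> /eqoP e_small; apply/cvgr0Pnorm_lt => eps eps_gt0.
pose M := `|d| + 1; have M_gt0 : 0 < M by rewrite ltr_wpDl.
have q_bounded : \forall h \near F, `|q h| < M.
  move/cvgrPdist_lt : y_quotient => /(_ 1 ltr01); apply: filterS => h dq_lt1.
  by rewrite -[q h](subKr d) (le_lt_trans (ler_normB _ _)) // ltrD2l.
have e_le := increment_cvg0 (e_small _ (divr_gt0 eps_gt0 M_gt0)).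
near=> h; have h_neq0 : h != 0 by near: h.
rewrite normrZ normfV.
apply: (@le_lt_trans _ _ (eps / M * `|q h|)).
  rewrite ler_pdivrMl ?normr_gt0 // mulrCA -normrZ.
  by near: h; move: e_le; exact.
by rewrite -[ltRHS](divfK (lt0r_neq0 M_gt0)) ltr_pM2l ?divr_gt0 //; near: h.
Unshelve. all: by end_near. Qed.

Lemma diff_difference_quotient_cvg (Phi : V -> W) : differentiable Phi x ->
  (fun h => h^-1 *: (Phi (y h) - Phi x)) @ F --> 'd Phi x d.
Proof.
move=> dPhi; pose e (k : V) : W := Phi (k + x) - (Phi x + 'd Phi x k).
have quotientE : \forall h \near F,
    'd Phi x (q h) + h^-1 *: e (h *: q h) = h^-1 *: (Phi (y h) - Phi x).
  near=> h; have h_neq0 : h != 0 by near: h.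
  have -> : y h = h *: q h + x by near: h.
  rewrite /e /= [X in Phi x + X]linearZ opprD addrA scalerBr scalerK //.
  by rewrite (addrC ('d Phi x (q h))) subrK.
apply: cvg_trans (near_eq_cvg quotientE) _.
rewrite -(addr0 ('d Phi x d)); apply: cvgD.
  by apply: continuous_cvg => //; exact: diff_continuous.
apply: remainder_quotient_cvg0; apply/eqoP/eqaddoP.
exact: (diff_locally dPhi).
Unshelve. all: by end_near. Qed.

Lemma diff_level_curve (Phi G : V -> W) :
  differentiable Phi x -> {for x, continuous G} -> Phi x = 0 ->
  (\forall h \near F, Phi (y h) + h *: G (y h) = 0) ->
  'd Phi x d = - G x.
Proof.
move=> dPhi G_cont Phi_x0 level.
have quotientE : \forall h \near F, - G (y h) = h^-1 *: (Phi (y h) - Phi x).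
  near=> h; have h_neq0 : h != 0 by near: h.
  have /eqP : Phi (y h) + h *: G (y h) = 0 by near: h.
  rewrite addr_eq0 => /eqP ->.
  by rewrite Phi_x0 subr0 scalerN scalerK.
apply: (cvg_unique _ (diff_difference_quotient_cvg dPhi)); first exact: norm_hausdorff.
apply: cvg_trans (near_eq_cvg quotientE) _; apply: cvgN.
by apply: continuous_cvg => //; exact: cvg_of_difference_quotient.
Unshelve. all: by end_near. Qed.

End DifferenceQuotients.

Lemma within_shifted_interval_proper (R : realType) (J : set R) (u : R) :
  is_interval J -> (exists a b, J a /\ J b /\ a < b) -> J u ->
  ProperFilter (within [set h | J (h + u)] (0 : R)^').
Proof.
move=> J_itv [a [b [Ja [Jb ab]]]] Ju.
apply: Build_ProperFilter_ex => P /nbhs_ballP [e /= e_gt0 e_ball].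
have P_small h : h != 0 -> `|h| < e -> J (h + u) -> P h.
  by move=> h_neq0 h_lt Jhu; apply: e_ball => //; rewrite /ball /= sub0r normrN.
have [ub|bu] := ltP u b.
  pose h := Num.min (e / 2) (b - u).
  have h_gt0 : 0 < h by rewrite lt_min divr_gt0 // subr_gt0.
  have [h_le_e h_le_b] : h <= e / 2 /\ h <= b - u by rewrite !ge_min !lexx orbT.
  exists h; apply: P_small; first exact: lt0r_neq0.
    by rewrite gtr0_norm //; lra.
  by apply: (J_itv u b) => //; apply/andP; split; lra.
pose h := Num.min (e / 2) (u - a).
have h_gt0 : 0 < h by rewrite lt_min divr_gt0 // subr_gt0; lra.
have [h_le_e h_le_a] : h <= e / 2 /\ h <= u - a by rewrite !ge_min !lexx orbT.
exists (- h); apply: P_small; first by rewrite oppr_eq0 lt0r_neq0.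
  by rewrite normrN gtr0_norm //; lra.
by apply: (J_itv a u) => //; apply/andP; split; lra.
Qed.

Lemma is_deriv_on_level_curve (R : realType) (V W : normedModType R)
    (J : set R) (Phi G : V -> W) (xs : R -> V) (u : R) (dx : V) :
  is_interval J -> (exists a b, J a /\ J b /\ a < b) -> J u ->
  is_deriv_on J xs u dx ->
  differentiable Phi (xs u) -> {for xs u, continuous G} ->
  (forall v, J v -> Phi (xs v) + (v - u) *: G (xs v) = 0) ->
  'd Phi (xs u) dx = - G (xs u).
Proof.
move=> J_itv J_nondeg Ju xs_deriv dPhi G_cont level.
have FF := within_shifted_interval_proper J_itv J_nondeg Ju.
apply: (diff_level_curve _ _ xs_deriv) => //.
- exact: cvg_trans (cvg_within _) (@nbhs_dnbhs R 0).
- by apply: filterS (nbhs_dnbhs_neq 0) => h h_neq0 _.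
- by have := level u Ju; rewrite subrr scale0r addr0.
- by apply: filterS (near_withinT _ _) => h /level; rewrite addrK.
Qed.

Section CoordinateScale.
Variables (R : realType) (m : nat) (W : normedModType R) (k : 'I_m) (w : W).

Let coord_is_linear : linear (fun v : 'rV[R]_m => v ord0 k).
Proof. by move=> r v1 v2; rewrite !mxE. Qed.

Let coord : {linear 'rV[R]_m -> R} :=
  HB.pack (fun v : 'rV[R]_m => v ord0 k)
    (GRing.isLinear.Build _ _ _ _ _ coord_is_linear).

Let continuous_coord : continuous coord.
Proof. exact: coord_continuous. Qed.

Let affine_coordE (a b : R) :
  (fun v : 'rV[R]_m => a + b * v ord0 k) = cst a + b *: (coord : 'rV[R]_m -> R).
Proof. by []. Qed.

Let affine_coord_differentiable (a b : R) (x : 'rV[R]_m) :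
  differentiable (fun v : 'rV[R]_m => a + b * v ord0 k) x.
Proof.
rewrite affine_coordE; apply: differentiableD; first exact: differentiable_cst.
by apply: differentiableZ; exact: differentiable_coord.
Qed.

Lemma differentiable_coord_scale (a b : R) (x : 'rV[R]_m) :
  differentiable (fun v : 'rV[R]_m => (a + b * v ord0 k) *: w) x.
Proof. exact/differentiableZl/affine_coord_differentiable. Qed.

Lemma diff_coord_scale (a b : R) (x v : 'rV[R]_m) :
  'd (fun v : 'rV[R]_m => (a + b * v ord0 k) *: w) x v = (b * v ord0 k) *: w.
Proof.
rewrite diffZl ?affine_coord_differentiable // affine_coordE diffD //.
- rewrite diffZ ?diff_cst ?(diff_lin _ continuous_coord) /=.
    by congr (_ *: _); exact: add0r.
  exact: differentiable_coord.
- by apply: differentiableZ; exact: differentiable_coord.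
Qed.

End CoordinateScale.

Lemma diff_Jac (R : realType) (n : nat) (f : 'rV[R]_n -> 'rV[R]_n)
    (x v : 'rV[R]_n) :
  'd f x v = v *m (Jac f x)^T.
Proof. by rewrite /Jac trmxK /jacobian mul_rV_lin1. Qed.

Section FsysJacobian.
Variables (R : realType) (n : nat) (f : 'rV[R]_n.+1 -> 'rV[R]_n.+1).
Variables (g : R -> R -> R) (u b : R) (x : 'rV[R]_n.+1).
Hypotheses (f_diff : differentiable f x) (g_affine : forall y, g u y = g u 0 + b * y).

Let FsysE : (fun v => Fsys f g v u) =
  f + (fun v : 'rV[R]_n.+1 => (g u 0 + b * v ord0 ord0) *: delta_mx ord0 ord0).
Proof. by apply/funext => v; rewrite /Fsys g_affine. Qed.

Lemma differentiable_Fsys : differentiable (fun v => Fsys f g v u) x.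
Proof.
by rewrite FsysE; apply: differentiableD => //; exact: differentiable_coord_scale.
Qed.

Lemma diff_Fsys (v : 'rV[R]_n.+1) :
  'd (fun v => Fsys f g v u) x v = 'd f x v + (b * v ord0 ord0) *: delta_mx ord0 ord0.
Proof.
have G_diff := differentiable_coord_scale ord0
  (delta_mx ord0 ord0 : 'rV[R]_n.+1) (g u 0) b x.
rewrite FsysE; apply: (etrans (congr1 (fun L => L v) (diffD f_diff G_diff))).
by rewrite -(diff_coord_scale _ _ (g u 0) _ x).
Qed.

Lemma Jac_Fsys : Jac (fun v => Fsys f g v u) x = Jac f x + b *: e11 R n.
Proof.
apply/matrixP => i k; rewrite /Jac /jacobian !mxE.
apply: (etrans (congr1 (fun r : 'rV_n.+1 => r ord0 i) (diff_Fsys _))).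
rewrite !mxE eqxx /= [ord0 == k]eq_sym.
by case: (i == ord0); case: (k == ord0); rewrite /= ?mulr1 ?mulr0.
Qed.

End FsysJacobian.

Lemma cramer_delta0 (R : comUnitRingType) (n : nat) (A : 'M[R]_n.+1)
    (v : 'rV[R]_n.+1) (a : R) (j : 'I_n.+1) :
  A \in unitmx -> v *m A^T = a *: delta_mx ord0 ord0 ->
  v ord0 j = a * cofactor A ord0 j / \det A.
Proof.
move=> A_unit vA.
have -> : v = (a *: delta_mx ord0 ord0) *m invmx A^T by rewrite -vA mulmxK // unitmx_tr.
rewrite -scalemxAl -rowE -trmx_inv /invmx A_unit !mxE.
by rewrite mulrCA mulrC.
Qed.

Lemma cofactor0_minor1 (R : realType) (n : nat) (M : 'M[R]_n.+1) (j : 'I_n.+1) :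
  cofactor M ord0 j = (-1) ^+ j * minor1 M j.
Proof. by rewrite /cofactor add0n. Qed.

Lemma minor1_addZe11 (R : realType) (n : nat) (M : 'M[R]_n.+1) (b : R)
    (j : 'I_n.+1) :
  minor1 (M + b *: e11 R n) j = minor1 M j.
Proof.
rewrite /minor1; congr (\det _); apply/matrixP => r s; rewrite !mxE.
by rewrite eq_sym (negbTE (neq_lift ord0 r)) /= mulr0 addr0.
Qed.

Definition gctrl_du (R : realType) (c : ctrl_kind) (xT x1 : R) : R :=
  match c with Flow => 1 | Activation => xT - x1 | Inhibition => - x1 end.

Definition gctrl_dx1 (R : realType) (c : ctrl_kind) (kon koff u : R) : R :=
  match c with Flow => 0 | _ => - (u + kon + koff) end.

Lemma gctrl_affine_u (R : realType) (c : ctrl_kind) (xT kon koff u v x1 : R) :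
  gctrl c xT kon koff v x1 = gctrl c xT kon koff u x1 + (v - u) * gctrl_du c xT x1.
Proof. by case: c => /=; ring. Qed.

Lemma gctrl_affine_x1 (R : realType) (c : ctrl_kind) (xT kon koff u x1 : R) :
  gctrl c xT kon koff u x1 = gctrl c xT kon koff u 0 + gctrl_dx1 c kon koff u * x1.
Proof. by case: c => /=; ring. Qed.

Lemma gctrl_du_continuous (R : realType) (c : ctrl_kind) (xT : R) :
  continuous (gctrl_du c xT).
Proof.
case: c => y /=; first exact: cvg_cst.
- by apply: cvgB; [exact: cvg_cst | exact: cvg_id].
- by apply: cvgN; exact: cvg_id.
Qed.

Theorem lemma8 (R : realType) (n : nat)
  (X : set 'rV[R]_n.+1) (J : set R) (f : 'rV[R]_n.+1 -> 'rV[R]_n.+1)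
  (c : ctrl_kind) (xT kon koff : R)
  (xs dxs : R -> 'rV[R]_n.+1) :
  (* J is a (nondegenerate) interval *)
  is_interval J -> (exists a b, J a /\ J b /\ a < b) ->
  (* f is C^1 on X *)
  (forall x, X x -> differentiable f x) ->
  {within X, continuous (Jac f)} ->
  (* every entry of df/dx has constant sign on X *)
  (forall i j x y, X x -> X y -> Num.sg (Jac f x i j) = Num.sg (Jac f y i j)) ->
  (* negative diagonal entries *)
  (forall i x, X x -> Jac f x i i < 0) ->
  0 < xT -> 0 < kon -> 0 < koff ->
  (* assumption (A0) *)
  (forall u0, J u0 -> exists x0, X x0 /\
      Fsys f (gctrl c xT kon koff) x0 u0 = 0 /\
      \rank (Jac (fun x => Fsys f (gctrl c xT kon koff) x u0) x0) = n.+1) ->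
  (* x* : continuously differentiable curve of steady states on J *)
  (forall u, J u -> X (xs u)) ->
  (forall u, J u -> is_deriv_on J xs u (dxs u)) ->
  {within J, continuous dxs} ->
  (forall u, J u -> Fsys f (gctrl c xT kon koff) (xs u) u = 0) ->
  (forall u, J u ->
     Jac (fun x => Fsys f (gctrl c xT kon koff) x u) (xs u) \in unitmx) ->
  forall (u : R) (j : 'I_n.+1), J u ->
  let Js := Jac f (xs u) in
  let x1 := xs u ord0 ord0 in
  (* j is 0-based here: paper's (-1)^j becomes (-1)^(j+1) *)
  dxs u ord0 j =
  match c with
  | Flow => (-1) ^+ j.+1 * minor1 Js j / \det Js
  | Activation => (-1) ^+ j.+1 * (xT - x1) * minor1 Js j
                   / \det (Js - @e11 R n * (u + kon + koff)%:M)
  | Inhibition => (-1) ^+ j.+2 * x1 * minor1 Js j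
                   / \det (Js - @e11 R n * (u + kon + koff)%:M)
  end.
Proof.
move=> J_itv J_nondeg f_diff _ _ _ _ _ _ _ X_xs xs_deriv _ steady Jac_unit u j Ju Js x1.
set g := gctrl c xT kon koff.
pose G (x : 'rV[R]_n.+1) : 'rV[R]_n.+1 :=
  gctrl_du c xT (x ord0 ord0) *: delta_mx ord0 ord0.
have f_diff_u := f_diff _ (X_xs _ Ju).
have g_affine := gctrl_affine_x1 c xT kon koff u.
have dF : 'd (fun x => Fsys f g x u) (xs u) (dxs u) = - G (xs u).
  apply: is_deriv_on_level_curve J_itv J_nondeg Ju (xs_deriv _ Ju) _ _ _.
  - exact: differentiable_Fsys.
  - apply: continuousZ (cvg_cst _).
    apply: (@continuous_comp _ _ _ (fun M : 'rV[R]_n.+1 => M ord0 ord0)).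
      exact: coord_continuous.
    exact: gctrl_du_continuous.
  - move=> v Jv; rewrite -(steady _ Jv) /Fsys /g (gctrl_affine_u _ _ _ _ u v).
    by rewrite [in RHS]scalerDl -scalerA addrA.
have dF_mx : dxs u *m (Jac (fun x => Fsys f g x u) (xs u))^T =
    - gctrl_du c xT x1 *: delta_mx ord0 ord0.
  by rewrite -diff_Jac dF scaleNr.
rewrite (cramer_delta0 j (Jac_unit _ Ju) dF_mx) (Jac_Fsys f_diff_u g_affine).
rewrite cofactor0_minor1 minor1_addZe11 -mulmxE mul_mx_scalar -scaleNr.
case: c {g steady Jac_unit G g_affine dF dF_mx} => /=.
all: by rewrite ?scale0r ?addr0 !exprS; ring.
Qed.
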